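(* Consider a distributed storage system $\mathcal{D}(n,k,d)$ with node storage capacity $\alpha$ and repair bandwidth $\gamma=d\beta$, in the presence of an omniscient active adversary controlling any $b\ge 1$ nodes. If $2b<k$, its resiliency capacity satisfies \[ C_r(\alpha,\gamma)\le\sum_{i=2b+1}^{k}\min\{(d-i+1)\beta,\ \alpha\}. \] If $2b\ge k$, then $C_r(\alpha,\gamma)=0$.
   Context: A distributed storage system (DSS) $\mathcal{D}(n,k,d)$, $k\le d\le n-1$: a source stores a file (a message $m$ from a finite set, all messages equally likely) on $n$ storage nodes, each storing at most $\alpha$ symbols. Nodes fail one at a time; each failed node is replaced by a new node that connects to some $d$ of the remaining $n-1$ active nodes and downloads $\beta=\gamma/d$ symbols from each (symmetric repair), then stores at most $\alpha$ symbols. A data collector connects to any $k$ simultaneously active nodes, downloads their stored contents, and must recover the file. An omniscient adversary knows the file, the storage/repair/decoding schemes and all stored data, and may control any $b$ nodes among all nodes ever in the system (initial nodes and/or replacement nodes, possibly at different times): for a controlled node it may arbitrarily alter the stored data and the messages that node sends to replacement nodes during repair and to data collectors. The resiliency capacity $C_r(\alpha,\gamma)$ is the maximum amount of data (file size, in symbols) that can be stored so that every data collector connecting to any $k$ active nodes, for any failure/repair sequence, recovers the file correctly whatever the adversary's choice of controlled nodes and actions. *)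

From mathcomp Require Import all_boot.
Set Implicit Arguments. Unset Strict Implicit. Unset Printing Implicit Defensive.

(* A repair event: (position of the failed node, set of d helper positions). *)
Definition event (n : nat) := ('I_n * {set 'I_n})%type.

Definition valid_event (n d : nat) (e : event n) : bool :=
  (e.1 \notin e.2) && (#|e.2| == d).

(* All functions may depend on the (public)
   failure/repair history.
   - enc m i        : initial content of node i;
   - send h e j c   : packet sent by helper at position j (storing c) for the
                      repair event e, the past history being h;
   - store h e ps   : content stored by the new node, from the packets ps of the
                      helpers (listed in the order of enum of the helper set);
   - decode h K cs  : the data collector's output, after history h, connecting
                      to the node set K and receiving the contents cs
                      (listed in the order of enum K). *)
Record scheme (n alpha beta : nat) (Sym M : finType) := Scheme {
  enc    : M -> 'I_n -> alpha.-tuple Sym;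
  send   : seq (event n) -> event n -> 'I_n -> alpha.-tuple Sym -> beta.-tuple Sym;
  store  : seq (event n) -> event n -> seq (beta.-tuple Sym) -> alpha.-tuple Sym;
  decode : seq (event n) -> {set 'I_n} -> seq (alpha.-tuple Sym) -> M }.

(* Nodes ever in the system are identified by (creation time, position):
   (0, i) is the initial node i; (s.+1, f) is the replacement node created at
   repair step s (0-based) at position f. *)
Definition nodeid (n : nat) := (nat * 'I_n)%type.

(* System state: for each position, the id-stamp and (honestly computed)
   content of the node currently active there. *)
Definition state (n alpha : nat) (Sym : finType) := 'I_n -> nat * alpha.-tuple Sym.

Section Run.
Variables (n alpha beta : nat) (Sym M : finType) (sch : scheme n alpha beta Sym M).
(* S : controlled nodes; advp s j : packet sent at repair step s by the
   controlled node at position j (arbitrary). *)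
Variables (S : seq (nodeid n)) (advp : nat -> 'I_n -> beta.-tuple Sym).

Definition step (past : seq (event n)) (e : event n) (st : state n alpha Sym)
  : state n alpha Sym :=
  let pkt j := if ((st j).1, j) \in S then advp (size past) j
               else send sch past e j (st j).2 in
  let c := store sch past e [seq pkt j | j <- enum e.2] in
  fun i => if i == e.1 then ((size past).+1, c) else st i.

Fixpoint run_from (past fut : seq (event n)) (st : state n alpha Sym)
  : state n alpha Sym :=
  match fut with
  | [::] => st
  | e :: fut' => run_from (rcons past e) fut' (step past e st)
  end.

Definition run (m : M) (hist : seq (event n)) : state n alpha Sym :=
  run_from [::] hist (fun i => (0, enc sch m i)).
End Run.

(* Resiliency: for every message, every valid failure/repair sequence, every
   data collector (any k active nodes), every choice of at most b controlled
   nodes (among all nodes ever in the system) and every behaviour of those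
   nodes (arbitrary repair packets and arbitrary data sent to the data
   collector), the data collector decodes the message correctly. *)
Definition resilient (n k d b alpha beta : nat) (Sym M : finType)
  (sch : scheme n alpha beta Sym M) : Prop :=
  forall (m : M) (hist : seq (event n)), all (valid_event d) hist ->
  forall K : {set 'I_n}, #|K| = k ->
  forall S : seq (nodeid n), size S <= b ->
  forall (advp : nat -> 'I_n -> beta.-tuple Sym) (advd : 'I_n -> alpha.-tuple Sym),
  let st := run sch S advp m hist in
  decode sch hist K
    [seq (if ((st j).1, j) \in S then advd j else (st j).2) | j <- enum K] = m.

(* Two messages m1, m2 are confused by every resilient scheme as soon as the
   honest observations they produce differ only at a set P of at most 2b initial
   nodes that are never replaced.  Split P into halves P1, P2 of size at most b:
   in the run storing m1 the adversary controls P1 and lets it behave as it would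
   honestly for m2, in the run storing m2 it controls P2 and lets it behave as for
   m1.  Every repaired node then stores the same content in both runs, and the data
   collector receives the same data, so resilience forces m1 = m2.

   For 2b < k take P = {0, ..., 2b-1} and, for i = 2b, ..., k-1 in turn, repair
   node i from the helpers {0, ..., d} \ {i} whenever the d - i helpers above i
   send fewer than alpha symbols.  The packets of these helpers, or else the
   content of node i, amount to min((d - i) beta, alpha) symbols and determine the
   message: a helper below i lies in P, has been repaired already, or is a
   non-repaired node whose content is recorded.  For k <= 2b the data collector
   can connect to k nodes of P, so all messages are confused. *)

From mathcomp Require Import all_boot.
Set Implicit Arguments. Unset Strict Implicit. Unset Printing Implicit Defensive.

Lemma leq_card_shape (M T : finType) (f : M -> seq (seq T)) (sh : seq nat) :
  injective f -> (forall m, shape (f m) = sh) -> #|M| <= #|T| ^ sumn sh.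
Proof.
move=> f_inj shape_f.
have size_flat m : size (flatten (f m)) == sumn sh by rewrite size_flatten shape_f.
pose g m : (sumn sh).-tuple T := Tuple (size_flat m).
have g_inj : injective g.
  move=> m1 m2 /(congr1 (fun t => reshape sh (val t))) /=.
  by rewrite -{1}(shape_f m1) -(shape_f m2) !flattenK => /f_inj.
by rewrite -card_tuple; apply: leq_card g_inj.
Qed.

Lemma shape_tuples (T : Type) (w : nat) (s : seq (w.-tuple T)) :
  shape (map val s) = nseq (size s) w.
Proof. by elim: s => //= t s ->; rewrite size_tuple. Qed.

Lemma flatten_tuples_inj (T : Type) (w : nat) (s1 s2 : seq (w.-tuple T)) :
  size s1 = size s2 -> flatten (map val s1) = flatten (map val s2) -> s1 = s2.
Proof.
move=> eq_size /(congr1 (reshape (nseq (size s1) w))).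
rewrite -{1}(shape_tuples s1) eq_size -(shape_tuples s2) !flattenK.
exact/inj_map/val_inj.
Qed.

Lemma map_eq_cat_cons (T U : Type) (f : T -> U) (s : seq T) (past fut : seq U) (e : U) :
  map f s = past ++ e :: fut ->
  exists s1 x s2, [/\ s = s1 ++ x :: s2, past = map f s1 & e = f x].
Proof.
elim: past s => [|p past IH] [|y s] //= [<-]; first by exists [::], y, s.
by move=> /IH [s1 [x [s2 [-> -> ->]]]]; exists (y :: s1), x, s2.
Qed.

Lemma filter_ltn_sorted_cat (s1 s2 : seq nat) (i : nat) :
  sorted ltn (s1 ++ i :: s2) -> [seq r <- s1 ++ i :: s2 | r < i] = s1.
Proof.
rewrite sorted_pairwise; last exact: ltn_trans.
rewrite pairwise_cat pairwise_cons => /and3P [/allrelP lt_s1 _ /andP [/allP gt_s2 _]].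
rewrite filter_cat /= ltnn (@eq_in_filter _ _ predT) ?filter_predT; last first.
  by move=> x x_s1; apply: lt_s1; rewrite ?inE ?eqxx.
rewrite (@eq_in_filter _ _ pred0) ?filter_pred0 ?cats0 // => y /gt_s2 lt_iy /=.
by rewrite ltnNge ltnW.
Qed.

Lemma split_card_double (T : finType) (P : {set T}) (b : nat) :
  #|P| <= 2 * b ->
  exists P1 P2 : {set T}, [/\ P = P1 :|: P2, [disjoint P1 & P2], #|P1| <= b & #|P2| <= b].
Proof.
move=> card_P.
exists [set x in take b (enum P)], [set x in drop b (enum P)]; split.
- by apply/setP => x; rewrite !inE -mem_cat cat_take_drop mem_enum.
- rewrite -setI_eq0; apply/eqP/setP => x; rewrite !inE.
  have /hasPn dis : ~~ has (mem (take b (enum P))) (drop b (enum P)).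
    by have := enum_uniq P; rewrite -{1}(cat_take_drop b (enum P)) cat_uniq => /and3P [].
  by apply/negbTE/andP => -[x_take /dis /negP].
- by rewrite cardsE (leq_trans (card_size _)) // size_take; case: ifP => // /negbT; rewrite -leqNgt.
- by rewrite cardsE (leq_trans (card_size _)) // size_drop -cardE leq_subLR addnn -mul2n.
Qed.

Lemma card_set_ltn (n c : nat) : #|[set j : 'I_n | j < c]| = minn c n.
Proof.
have le_min : minn c n <= n by apply: geq_minr.
have -> : [set j : 'I_n | j < c] = [set widen_ord le_min i | i : 'I_(minn c n)].
  apply/setP => j; rewrite inE; apply/idP/imsetP => [lt_jc | [i _ ->]].
    have lt_j_min : j < minn c n by rewrite leq_min lt_jc ltn_ord.
    by exists (Ordinal lt_j_min) => //; apply: val_inj.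
  by rewrite /= (leq_trans (ltn_ord i)) // geq_minl.
by rewrite card_imset ?card_ord // => i i' /(congr1 val) /= /val_inj.
Qed.

Section Impersonation.
Variables (n alpha beta : nat) (Sym M : finType) (sch : scheme n alpha beta Sym M).

Definition initial_nodes (P : {set 'I_n}) : seq (nodeid n) := [seq (0, i) | i <- enum P].

Lemma mem_initial_nodes (P : {set 'I_n}) (x : nat) (j : 'I_n) :
  ((x, j) \in initial_nodes P) = (x == 0) && (j \in P).
Proof.
apply/mapP/andP => [[i]|[/eqP-> jP]]; last by exists j; rewrite ?mem_enum.
by rewrite mem_enum => iP [-> ->].
Qed.

Lemma size_initial_nodes (P : {set 'I_n}) : size (initial_nodes P) = #|P|.
Proof. by rewrite size_map cardE. Qed.

Definition impersonate (hist : seq (event n)) (m : M) (s : nat) (j : 'I_n) : beta.-tuple Sym :=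
  send sch (take s hist) (nth (j, set0) hist s) j (enc sch m j).

Variables (m1 m2 : M) (hist : seq (event n)) (P1 P2 : {set 'I_n}).
Hypothesis disjoint_P12 : [disjoint P1 & P2].
Hypothesis P12_unrepaired : forall j, j \in P1 :|: P2 -> j \notin map fst hist.
Hypothesis helpers_agree : forall past e fut, past ++ e :: fut = hist ->
  forall j, j \in e.2 -> j \notin P1 :|: P2 -> j \notin map fst past ->
  send sch past e j (enc sch m1 j) = send sch past e j (enc sch m2 j).

Definition agree (past : seq (event n)) (stA stB : state n alpha Sym) :=
  forall j, if j \in map fst past then stA j = stB j
            else stA j = (0, enc sch m1 j) /\ stB j = (0, enc sch m2 j).

(* [g] is how a reader uses the content at [j]: [send] for a newcomer's helper,
   the identity for the data collector. *)
Lemma observed_eq (T : Type) (g : alpha.-tuple Sym -> T) past stA stB j :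
  agree past stA stB ->
  (j \in P1 :|: P2 -> j \notin map fst past) ->
  (j \notin P1 :|: P2 -> j \notin map fst past -> g (enc sch m1 j) = g (enc sch m2 j)) ->
  (if ((stA j).1, j) \in initial_nodes P1 then g (enc sch m2 j) else g (stA j).2) =
  (if ((stB j).1, j) \in initial_nodes P2 then g (enc sch m1 j) else g (stB j).2).
Proof.
move=> /(_ j) agree_j P_fresh g_eq; rewrite !mem_initial_nodes.
have [jP | jNP] := boolP (j \in P1 :|: P2).
  move: agree_j; rewrite (negbTE (P_fresh jP)) => -[-> ->] /=.
  by case/setUP: jP => jP; rewrite jP ?(disjointFr disjoint_P12 jP) ?(disjointFl disjoint_P12 jP).
have /norP [/negbTE -> /negbTE ->] : ~~ ((j \in P1) || (j \in P2)) by rewrite -in_setU.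
rewrite !andbF; move: agree_j; case: ifP => [_ -> // | /negbT j_new [-> ->]].
exact: g_eq.
Qed.

Lemma agree_run_from fut past stA stB :
  past ++ fut = hist -> agree past stA stB ->
  agree hist (run_from sch (initial_nodes P1) (impersonate hist m2) past fut stA)
             (run_from sch (initial_nodes P2) (impersonate hist m1) past fut stB).
Proof.
elim: fut past stA stB => [|e fut IH] past stA stB def_hist agree_AB /=.
  by rewrite -def_hist cats0.
apply: IH; first by rewrite cat_rcons.
have P_fresh j : j \in P1 :|: P2 -> j \notin map fst past.
  by move=> /P12_unrepaired; apply: contra; rewrite -def_hist map_cat mem_cat => ->.
have impersonateE m j : impersonate hist m (size past) j = send sch past e j (enc sch m j).
  by rewrite /impersonate -def_hist take_size_cat // nth_cat ltnn subnn.
have packets_eq : forall j, j \in enum e.2 ->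
    (if ((stA j).1, j) \in initial_nodes P1 then impersonate hist m2 (size past) j
     else send sch past e j (stA j).2) =
    (if ((stB j).1, j) \in initial_nodes P2 then impersonate hist m1 (size past) j
     else send sch past e j (stB j).2).
  move=> j; rewrite mem_enum => j_helper; rewrite !impersonateE.
  exact: observed_eq (P_fresh j) (helpers_agree def_hist j_helper).
move/eq_in_map: packets_eq; rewrite /step => -> i; rewrite map_rcons mem_rcons inE.
by have [-> // | _] := eqVneq i e.1; apply: agree_AB.
Qed.

Lemma agree_run :
  agree hist (run sch (initial_nodes P1) (impersonate hist m2) m1 hist)
             (run sch (initial_nodes P2) (impersonate hist m1) m2 hist).
Proof. exact: agree_run_from. Qed.

End Impersonation.

Lemma resilient_confusion (n k d b alpha beta : nat) (Sym M : finType)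
    (sch : scheme n alpha beta Sym M) (m1 m2 : M) (hist : seq (event n)) (K P : {set 'I_n}) :
  resilient k d b sch -> all (valid_event d) hist -> #|K| = k -> #|P| <= 2 * b ->
  (forall j, j \in P -> j \notin map fst hist) ->
  (forall past e fut, past ++ e :: fut = hist ->
     forall j, j \in e.2 -> j \notin P -> j \notin map fst past ->
     send sch past e j (enc sch m1 j) = send sch past e j (enc sch m2 j)) ->
  (forall j, j \in K -> j \notin P -> j \notin map fst hist -> enc sch m1 j = enc sch m2 j) ->
  m1 = m2.
Proof.
move=> res valid card_K card_P P_unrepaired helpers_agree K_agree.
have [P1 [P2 [def_P disjoint_P12 card_P1 card_P2]]] := split_card_double card_P.
rewrite def_P in P_unrepaired helpers_agree K_agree.
have agree_AB := agree_run disjoint_P12 P_unrepaired helpers_agree.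
have size_P1 : size (initial_nodes P1) <= b by rewrite size_initial_nodes.
have size_P2 : size (initial_nodes P2) <= b by rewrite size_initial_nodes.
have decode1 := res m1 hist valid K card_K _ size_P1 (impersonate sch hist m2) (enc sch m2).
have decode2 := res m2 hist valid K card_K _ size_P2 (impersonate sch hist m1) (enc sch m1).
apply: etrans (esym decode1) (etrans _ decode2) => /=.
congr decode; apply/eq_in_map => j; rewrite mem_enum => j_K.
apply: (observed_eq disjoint_P12 (g := fun c => c) agree_AB) => [/P_unrepaired //|].
exact: K_agree.
Qed.

Section RepairChain.
Variables (n k d b alpha beta : nat) (Sym M : finType) (sch : scheme n.+1 alpha beta Sym M).
Hypotheses (le_kd : k <= d) (le_dn : d <= n) (lt_2b_k : 2 * b < k).

Definition cheap (i : nat) := (d - i) * beta < alpha.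

Definition targets := iota (2 * b) (k - 2 * b).

Definition repaired := [seq i <- targets | cheap i].

Definition repair_event (i : nat) : event n.+1 :=
  (inord i, [set j : 'I_n.+1 | j < d.+1] :\ inord i).

Definition chain := map repair_event repaired.

Definition chain_before (i : nat) := map repair_event [seq r <- repaired | r < i].

Definition upper_helpers (i : nat) : seq 'I_n.+1 := [seq inord j | j <- iota i.+1 (d - i)].

Definition repair_packets (m : M) (i : nat) :=
  [seq send sch (chain_before i) (repair_event i) j (enc sch m j) | j <- upper_helpers i].

Definition piece (m : M) (i : nat) : seq Sym :=
  if cheap i then flatten (map val (repair_packets m i)) else val (enc sch m (inord i)).

Definition view (m : M) := [seq piece m i | i <- targets].

Lemma val_inord_lt_k (i : nat) : i < k -> (inord i : 'I_n.+1) = i :> nat.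
Proof. by move=> lt_ik; rewrite inordK // ltnS (leq_trans (ltnW lt_ik)) // (leq_trans le_kd). Qed.

Lemma mem_targets (i : nat) : (i \in targets) = (2 * b <= i < k).
Proof. by rewrite mem_iota subnKC // ltnW. Qed.

Lemma mem_repaired (i : nat) : (i \in repaired) = cheap i && (2 * b <= i < k).
Proof. by rewrite mem_filter mem_targets. Qed.

Lemma sorted_repaired : sorted ltn repaired.
Proof. exact/sorted_filter/iota_ltn_sorted/ltn_trans. Qed.

Lemma mem_fst_repair_events (s : seq nat) (j : 'I_n.+1) :
  val j \in s -> j \in map fst (map repair_event s).
Proof. by move=> j_s; apply/mapP; exists (repair_event j); rewrite ?map_f //= inord_val. Qed.

Lemma valid_chain : all (valid_event d) chain.
Proof.
rewrite all_map; apply/allP => i; rewrite mem_repaired => /and3P [_ _ lt_ik].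
rewrite /valid_event /= !inE eqxx /=.
have := cardsD1 (inord i : 'I_n.+1) [set j : 'I_n.+1 | j < d.+1].
rewrite card_set_ltn inE val_inord_lt_k // ltnS (leq_trans (ltnW lt_ik) le_kd).
by rewrite (minn_idPl _) ?ltnS // add1n => /eqP; rewrite eqSS eq_sym.
Qed.

Lemma chain_avoids_low (j : 'I_n.+1) : j \in [set j : 'I_n.+1 | j < 2 * b] -> j \notin map fst chain.
Proof.
rewrite inE => lt_j; apply/negP => /mapP [_ /mapP [i i_rep ->] /= def_j].
move: i_rep lt_j; rewrite mem_repaired def_j => /and3P [_ le_2b_i lt_ik].
by rewrite val_inord_lt_k // ltnNge le_2b_i.
Qed.

Section EqualViews.
Variables (m1 m2 : M).
Hypothesis eq_view : view m1 = view m2.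

Lemma piece_eq (i : nat) : 2 * b <= i < k -> piece m1 i = piece m2 i.
Proof. by rewrite -mem_targets; move: eq_view => /eq_in_map; apply. Qed.

Lemma enc_eq_unrepaired (j : 'I_n.+1) :
  2 * b <= j < k -> val j \notin repaired -> enc sch m1 j = enc sch m2 j.
Proof.
move=> j_target; rewrite mem_repaired j_target andbT => /negbTE expensive.
by have := piece_eq j_target; rewrite /piece expensive inord_val => /val_inj.
Qed.

Lemma repair_packets_eq (i : nat) : i \in repaired -> repair_packets m1 i = repair_packets m2 i.
Proof.
rewrite mem_repaired => /andP [cheap_i i_target].
have := piece_eq i_target; rewrite /piece cheap_i.
by apply: flatten_tuples_inj; rewrite !size_map.
Qed.

Lemma helpers_agree_chain past e fut : past ++ e :: fut = chain ->
  forall j, j \in e.2 -> j \notin [set j : 'I_n.+1 | j < 2 * b] -> j \notin map fst past ->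
  send sch past e j (enc sch m1 j) = send sch past e j (enc sch m2 j).
Proof.
move=> def_chain j; have [R1 [i [R2 [def_rep -> ->]]]] := map_eq_cat_cons (esym def_chain).
have i_rep : i \in repaired by rewrite def_rep mem_cat mem_head orbT.
have before_i : chain_before i = map repair_event R1.
  by rewrite /chain_before def_rep filter_ltn_sorted_cat // -def_rep sorted_repaired.
have lt_ik : i < k by move: i_rep; rewrite mem_repaired => /and3P [].
rewrite !inE -leqNgt => /andP [j_ne_i lt_jd] le_2b_j j_fresh.
have [lt_ij | lt_ji | eq_ij] := ltngtP i j.
- have j_up : j \in upper_helpers i.
    apply/mapP; exists (val j); rewrite ?inord_val // mem_iota lt_ij addSn subnKC //.
    exact: leq_trans (ltnW lt_ik) le_kd.
  have := repair_packets_eq i_rep; rewrite /repair_packets before_i.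
  by move=> /eq_in_map; apply.
- rewrite enc_eq_unrepaired ?le_2b_j ?(ltn_trans lt_ji) //.
  apply: contra j_fresh => j_rep; rewrite -before_i; apply: mem_fst_repair_events.
  by rewrite mem_filter lt_ji.
- by move: j_ne_i; rewrite eq_ij inord_val eqxx.
Qed.

End EqualViews.

Hypothesis resilient_sch : resilient k d b sch.

Lemma view_inj : injective view.
Proof.
move=> m1 m2 eq_view.
apply: (resilient_confusion resilient_sch valid_chain (K := [set j : 'I_n.+1 | j < k])
          (P := [set j : 'I_n.+1 | j < 2 * b])).
- by rewrite card_set_ltn; apply/minn_idPl; rewrite (leq_trans le_kd) // ltnW.
- by rewrite card_set_ltn geq_minl.
- exact: chain_avoids_low.
- exact: helpers_agree_chain.
- move=> j; rewrite !inE -leqNgt => lt_jk le_2b_j j_fresh.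
  by apply: enc_eq_unrepaired; rewrite ?le_2b_j //; apply: contra j_fresh; apply: mem_fst_repair_events.
Qed.

Lemma shape_view (m : M) : shape (view m) = [seq minn ((d - i) * beta) alpha | i <- targets].
Proof.
rewrite /shape -map_comp; apply: eq_map => i /=; rewrite /piece /minn -/(cheap i).
case: (cheap i); last by rewrite size_tuple.
by rewrite size_flatten shape_tuples sumn_nseq !size_map size_iota mulnC.
Qed.

Lemma card_le_repair_chain : #|M| <= #|Sym| ^ (\sum_(2 * b <= i < k) minn ((d - i) * beta) alpha).
Proof. by have := leq_card_shape view_inj shape_view; rewrite sumnE big_map. Qed.

End RepairChain.

Lemma resilient_card_le1 (n k d b alpha beta : nat) (Sym M : finType)
    (sch : scheme n alpha beta Sym M) :
  k <= n -> k <= 2 * b -> resilient k d b sch -> #|M| <= 1.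
Proof.
move=> le_kn le_k_2b res; apply/card_le1_eqP => m1 m2 _ _.
have card_K : #|[set j : 'I_n | j < k]| = k by rewrite card_set_ltn; apply/minn_idPl.
apply: (resilient_confusion res (hist := [::]) (P := [set j : 'I_n | j < k]) _ card_K) => //.
- by rewrite card_K.
- by case.
- by move=> j ->.
Qed.

Theorem theorem3 (n k d b alpha beta : nat) (Sym : finType) :
  1 < #|Sym| -> 1 <= b -> k <= d -> d <= n - 1 ->
  (2 * b < k ->
     forall (M : finType) (sch : scheme n alpha beta Sym M),
       resilient k d b sch ->
       #|M| <= #|Sym| ^ (\sum_((2 * b).+1 <= i < k.+1) minn ((d - i + 1) * beta) alpha))
  /\
  (k <= 2 * b ->
     (forall (M : finType) (sch : scheme n alpha beta Sym M),
        resilient k d b sch -> #|M| <= 1)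
     /\ exists sch : scheme n alpha beta Sym unit, resilient k d b sch).
Proof.
move=> Sym_gt1 _ le_kd le_d_n1; split=> [lt_2b_k M | le_k_2b].
  case: n le_d_n1 => [|n] le_dn sch res.
    by have := leq_trans lt_2b_k (leq_trans le_kd le_dn).
  rewrite subn1 /= in le_dn.
  have -> : \sum_((2 * b).+1 <= i < k.+1) minn ((d - i + 1) * beta) alpha
          = \sum_(2 * b <= i < k) minn ((d - i) * beta) alpha.
    rewrite -addn1 big_addn subn1 /=; apply: eq_big_nat => i /andP [_ lt_ik].
    by rewrite subnDA subnK // subn_gt0 (leq_trans lt_ik).
  exact: card_le_repair_chain le_kd le_dn lt_2b_k res.
split=> [M sch | ].
  by apply: resilient_card_le1 le_k_2b; rewrite (leq_trans le_kd) // (leq_trans le_d_n1) ?leq_subr.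
have [x0 _] : exists x : Sym, x \in Sym by apply/card_gt0P; apply: ltnW.
by exists (Scheme (fun _ _ => [tuple x0 | _ < alpha]) (fun _ _ _ _ => [tuple x0 | _ < beta])
                 (fun _ _ _ => [tuple x0 | _ < alpha]) (fun _ _ _ => tt)) => -[].
Qed.
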